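(* Let $\Sigma$ be an alphabet with $|\Sigma|=3$. For every antimorphic involution $\theta$ on $\Sigma^*$, there exists an infinite word over $\Sigma$ that is pseudo-cube-free with respect to $\theta$.
   Context: A function $\theta:\Sigma^*\to\Sigma^*$ is an antimorphic involution if $\theta(uv)=\theta(v)\theta(u)$ and $\theta(\theta(w))=w$. A pseudo cube with respect to $\theta$ is a nonempty word $u_1u_2u_3$ such that for all $1\le i,j\le 3$, $u_i=u_j$ or $u_i=\theta(u_j)$. A word is pseudo-cube-free with respect to $\theta$ if no factor (contiguous subword) of it is a pseudo cube. *)

From mathcomp Require Import all_boot.
Set Implicit Arguments. Unset Strict Implicit. Unset Printing Implicit Defensive.

Definition antimorphic_involution (T : Type) (theta : seq T -> seq T) : Prop :=
  (forall u v : seq T, theta (u ++ v) = theta v ++ theta u) /\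
  (forall w : seq T, theta (theta w) = w).

Definition pseudo_cube (T : Type) (theta : seq T -> seq T) (w : seq T) : Prop :=
  w <> [::] /\
  exists u1 u2 u3 : seq T,
    w = u1 ++ u2 ++ u3 /\
    let u := fun i : nat => match i with 0 => u1 | 1 => u2 | _ => u3 end in
    forall i j : nat, i < 3 -> j < 3 -> u i = u j \/ u i = theta (u j).

Definition factor (T : Type) (x : nat -> T) (i n : nat) : seq T :=
  map x (iota i n).

Definition inf_pseudo_cube_free (T : Type) (theta : seq T -> seq T)
  (x : nat -> T) : Prop :=
  forall i n : nat, ~ pseudo_cube theta (factor x i n).

From mathcomp Require Import all_boot zify.
Set Implicit Arguments. Unset Strict Implicit. Unset Printing Implicit Defensive.

(* An antimorphic involution is [w |-> rev (map f w)] for an involution [f] of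
   the letters.  If [f] moves some letter [a], pick a third letter [c]: since
   f a lies outside {a, c}, a word over {a, c} equals the image of another one
   only if the two are equal, so a pseudo cube over {a, c} is a cube, and the
   Thue-Morse word written with a and c is overlap-free.  If [f] is the
   identity, a pseudo cube starts with u1 u2 where u1 = u2 or u1 = rev u2,
   i.e. with a square or with two equal adjacent letters; the ternary word of
   first differences of Thue-Morse is square-free. *)

Lemma antimorphic_involution_rev_map (T : Type) (theta : seq T -> seq T) :
  antimorphic_involution theta ->
  exists2 f : T -> T, involutive f & forall w, theta w = rev (map f w).
Proof.
case=> theta_cat theta_inv.
have theta_nil : theta [::] = [::].
  by apply/size0nil; have := congr1 size (theta_cat [::] [::]); rewrite /= size_cat; lia.
have theta_cons a w : theta (a :: w) = theta w ++ theta [:: a] := theta_cat [:: a] w.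
have theta1_gt0 a : 0 < size (theta [:: a]).
  by case E: (theta [:: a]) => //; have := theta_inv [:: a]; rewrite E theta_nil.
have size_theta_ge w : size w <= size (theta w).
  by elim: w => //= a w IHw; rewrite theta_cons size_cat -addn1 leq_add.
have size_theta1 a : size (theta [:: a]) = 1.
  apply/eqP; rewrite eqn_leq theta1_gt0 andbT.
  by have := size_theta_ge (theta [:: a]); rewrite theta_inv.
pose f a := head a (theta [:: a]).
have theta1 a : theta [:: a] = [:: f a].
  by rewrite /f; case: (theta [:: a]) (size_theta1 a) => [|b []].
have thetaE w : theta w = rev (map f w).
  by elim: w => //= a w IHw; rewrite theta_cons IHw theta1 rev_cons cats1.
by exists f => // a; have := theta_inv [:: a]; rewrite !theta1 => -[].
Qed.

Section Factor.

Variables (T : Type) (x : nat -> T).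

Lemma size_factor i n : size (factor x i n) = n.
Proof. by rewrite size_map size_iota. Qed.

Lemma factor_cat i m n :
  factor x i (m + n) = factor x i m ++ factor x (i + m) n.
Proof. by rewrite /factor iotaD map_cat. Qed.

Lemma nth_factor i n k y : k < n -> nth y (factor x i n) k = x (i + k).
Proof. by move=> lt_kn; rewrite (nth_map 0) ?size_iota ?nth_iota. Qed.

Lemma factor_eq_pointwise i j n :
  factor x i n = factor x j n -> forall k, k < n -> x (i + k) = x (j + k).
Proof.
by move=> eq_ij k lt_kn; have := congr1 (nth (x 0) ^~ k) eq_ij; rewrite /= !nth_factor.
Qed.

End Factor.

Lemma pseudo_cube_factor (T : eqType) (theta : seq T -> seq T) (x : nat -> T) i n :
  (forall w, size (theta w) = size w) -> pseudo_cube theta (factor x i n) ->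
  exists2 m, 0 < m &
    (factor x i m = factor x (i + m) m \/ factor x i m = theta (factor x (i + m) m)) /\
    (factor x (i + m) m = factor x (i + m + m) m \/
     factor x (i + m) m = theta (factor x (i + m + m) m)).
Proof.
move=> size_theta [w_neq0 [u1 [u2 [u3 [w_eq rel]]]]].
have [r12 r23] := (rel 0 1 isT isT, rel 1 2 isT isT); rewrite /= in r12 r23.
have size_rel u v : u = v \/ u = theta v -> size u = size v by case=> ->.
set m := size u1.
have size_u2 : size u2 = m := esym (size_rel _ _ r12).
have size_u3 : size u3 = m by rewrite -(size_rel _ _ r23).
have n_eq : n = m + (m + m) by rewrite -(size_factor x i n) w_eq !size_cat size_u2 size_u3.
exists m.
  by rewrite lt0n; apply: contra_notN w_neq0 => /eqP m0; rewrite n_eq m0.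
move/eqP: w_eq; rewrite n_eq !factor_cat.
rewrite eqseq_cat ?size_factor // eqseq_cat ?size_factor ?size_u2 //.
by case/and3P=> /eqP-> /eqP-> /eqP->.
Qed.

Lemma exists_notin_pair (T : finType) (a b : T) : 2 < #|T| -> exists c, c \notin [:: a; b].
Proof.
move=> T_gt2; case: (pickP (predC (mem [:: a; b]))) => [c|all_in]; first by exists c.
suff : #|T| <= 2 by rewrite leqNgt T_gt2.
apply: leq_trans (card_size [:: a; b]); apply/subset_leq_card/subsetP => y _.
by have /negbFE := all_in y.
Qed.

Lemma rev_map_eq_on_pair (T : eqType) (f : T -> T) (a c : T) (u w : seq T) :
  involutive f -> f a \notin [:: a; c] ->
  all (mem [:: a; c]) u -> all (mem [:: a; c]) w -> u = rev (map f w) -> u = w.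
Proof.
move=> f_inv fa_ac u_ac w_ac u_eq.
have fw_u y : y \in w -> f y \in [:: a; c].
  by move=> yw; apply: (allP u_ac); rewrite u_eq mem_rev map_f.
have w_c y : y \in w -> y = c /\ f y = y.
  move=> yw; have fy_ac := fw_u y yw; have := allP w_ac y yw.
  rewrite !inE => /orP[/eqP ya | /eqP yc]; first by rewrite ya (negbTE fa_ac) in fy_ac.
  split=> //; move: fy_ac; rewrite yc !inE => /orP[/eqP fc | /eqP //].
  by move: fa_ac; rewrite -fc f_inv !inE eqxx orbT.
have w_nseq : w = nseq (size w) c by apply/all_pred1P/allP => y /w_c[-> _] /=.
by rewrite u_eq map_id_in => [|y /w_c[_]//]; rewrite w_nseq rev_nseq.
Qed.

Section ThueMorse.

Fixpoint thue_morse_rec (fuel n : nat) : bool :=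
  if fuel is fuel'.+1 then odd n (+) thue_morse_rec fuel' n./2 else false.

(* The fuel [n] suffices: the recursion divides [n] by 2 at each step. *)
Definition thue_morse n := thue_morse_rec n n.

Local Notation tm := thue_morse.

Lemma thue_morse_rec0 fuel : thue_morse_rec fuel 0 = false.
Proof. by elim: fuel. Qed.

Lemma thue_morse_rec_fuel f g n : n <= f -> n <= g -> thue_morse_rec f n = thue_morse_rec g n.
Proof.
elim: f g n => [|f IHf] [|g] [|n] //= le_nf le_ng; rewrite ?thue_morse_rec0 //.
by congr addb; apply: IHf; lia.
Qed.

Lemma thue_morseE n : tm n = odd n (+) tm n./2.
Proof.
case: n => [|n] //=; rewrite /thue_morse /=.
by congr addb; apply: thue_morse_rec_fuel; lia.
Qed.

Lemma thue_morse_double n : tm n.*2 = tm n.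
Proof. by rewrite thue_morseE odd_double doubleK. Qed.

Lemma thue_morse_doubleS n : tm n.*2.+1 = ~~ tm n.
Proof. by rewrite thue_morseE /= odd_double uphalf_double. Qed.

Lemma thue_morse_addn_double n k : tm (n + k.*2) = odd n (+) tm (n./2 + k).
Proof. by rewrite thue_morseE oddD odd_double addbF halfD odd_double andbF doubleK. Qed.

Lemma thue_morse_no_triple n : tm n = tm n.+1 -> tm n.+1 = tm n.+2 -> False.
Proof.
have pair m : tm m.*2.+1 = ~~ tm m.*2 by rewrite thue_morse_doubleS thue_morse_double.
move: (odd_double_half n); case: (odd n) => /= <-.
  by rewrite add1n -doubleS !pair => _; case: (tm _).
by rewrite add0n pair; case: (tm _).
Qed.

(* Reading the four equations at the level of [tm] halves their indices and
   produces three equal consecutive letters. *)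
Lemma thue_morse_odd_shift j q : ~ (forall k, k <= 3 -> tm (j.*2.+1 + k) = tm (q.*2 + k)).
Proof.
move=> shift.
have step r s : tm r.*2.+1 = tm s.*2 -> tm r.+1.*2 = tm s.*2.+1 -> tm r = tm r.+1.
  by rewrite thue_morse_doubleS !thue_morse_double thue_morse_doubleS => <- ->; rewrite negbK.
have := shift 0 isT; have := shift 1 isT; have := shift 2 isT; have := shift 3 isT.
rewrite !addnS !addn0 -!doubleS => e3 e2 e1 e0.
exact: thue_morse_no_triple (step _ _ e0 e1) (step _ _ e2 e3).
Qed.

Theorem thue_morse_overlap_free i p :
  0 < p -> ~ (forall k, k <= p -> tm (i + k) = tm (i + p + k)).
Proof.
elim/ltn_ind: p i => p IHp i p_gt0 overlap.
have period a : i <= a <= i + p -> tm a = tm (a + p).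
  case/andP=> le_ia le_a; rewrite -(subnKC le_ia) overlap; first by rewrite addnAC.
  by rewrite leq_subLR.
have := odd_double_half p; set q := p./2; case: (odd p) => /= p_eq.
- have [q0 | q_gt0] := posnP q.
    move: (period i) (period i.+1); rewrite -p_eq q0 !addn1 => e0 e1.
    by apply: (thue_morse_no_triple (e0 _) (e1 _)); rewrite !leqnSn leqnn.
  have := odd_double_half i; set m := i./2; case: (odd i) => /= i_eq.
    apply: (@thue_morse_odd_shift m (m + q).+1) => k le_k3.
    by rewrite period; [congr tm | ]; lia.
  apply: (@thue_morse_odd_shift (m + q) m) => k le_k3.
  by rewrite [RHS]period; [congr tm | ]; lia.
- have [q_gt0 q_lt] : 0 < q /\ q < p by lia.
  apply: (IHp q q_lt i./2 q_gt0) => k le_kq.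
  have := overlap k.*2; rewrite -p_eq add0n leq_double -addnA -doubleD.
  by rewrite !thue_morse_addn_double addnA => /(_ le_kq)/addbI.
Qed.

(* [tm_delta n] encodes the pair (tm n, tm n.+1) up to complementing both. *)
Definition tm_delta n : nat := 1 + tm n.+1 - tm n.

Lemma tm_delta_lt3 n : tm_delta n < 3.
Proof. by rewrite /tm_delta; case: (tm n) (tm n.+1) => [] []. Qed.

Lemma tm_delta_eq_addb m n :
  tm_delta m = tm_delta n -> tm m (+) tm n = tm m.+1 (+) tm n.+1.
Proof. by rewrite /tm_delta; case: (tm m) (tm n) (tm m.+1) (tm n.+1) => [] [] [] []. Qed.

Lemma tm_delta_eq_neq m n : tm_delta m = tm_delta n -> tm m != tm n -> tm m = tm m.+1.
Proof. by rewrite /tm_delta; case: (tm m) (tm n) (tm m.+1) (tm n.+1) => [] [] [] []. Qed.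

Theorem tm_delta_square_free i p :
  0 < p -> ~ (forall k, k < p -> tm_delta (i + k) = tm_delta (i + p + k)).
Proof.
move=> p_gt0 square.
have addb_const k : k <= p -> tm (i + k) (+) tm (i + p + k) = tm i (+) tm (i + p).
  elim: k => [|k IHk] lt_kp; first by rewrite !addn0.
  by rewrite !addnS -(tm_delta_eq_addb (square k lt_kp)) IHk // ltnW.
case: (boolP (tm i (+) tm (i + p))) => [differ | same].
  have const k : k <= p -> tm (i + k) = tm i.
    elim: k => [|k IHk] lt_kp; first by rewrite addn0.
    rewrite addnS -(tm_delta_eq_neq (square k lt_kp)); first by rewrite IHk // ltnW.
    by rewrite -negb_add addb_const ?differ // ltnW.
  by move: differ; rewrite const // addbb.
apply: (thue_morse_overlap_free p_gt0 (i := i)) => k le_kp; apply/eqP.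
by rewrite -negb_add addb_const // same.
Qed.

End ThueMorse.

Lemma thue_morse_pseudo_cube_free (T : eqType) (theta : seq T -> seq T) (f : T -> T) a c :
  involutive f -> (forall w, theta w = rev (map f w)) -> f a \notin [:: a; c] -> c != a ->
  inf_pseudo_cube_free theta (fun n => if thue_morse n then a else c).
Proof.
move=> f_inv thetaE fa_ac ca; set x := fun n => _.
have size_theta w : size (theta w) = size w by rewrite thetaE size_rev size_map.
have x_ac j m : all (mem [:: a; c]) (factor x j m).
  by apply/allP => _ /mapP[k _ ->]; rewrite /x; case: thue_morse; rewrite !inE eqxx ?orbT.
have related_eq j k m :
    factor x j m = factor x k m \/ factor x j m = theta (factor x k m) ->
    factor x j m = factor x k m.
  by case=> // u_eq; apply: rev_map_eq_on_pair f_inv fa_ac (x_ac _ _) (x_ac _ _) _; rewrite -thetaE.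
have x_inj p q : x p = x q -> thue_morse p = thue_morse q.
  by rewrite /x; case: thue_morse; case: thue_morse => // ac; rewrite ?ac eqxx in ca.
move=> i n /(pseudo_cube_factor size_theta)[m m_gt0 [/related_eq e12 /related_eq e23]].
apply: (thue_morse_overlap_free m_gt0 (i := i)) => k; rewrite leq_eqVlt.
case/orP=> [/eqP-> | lt_km]; apply: x_inj.
  by have := factor_eq_pointwise e23 m_gt0; rewrite !addn0.
exact: factor_eq_pointwise e12 _ lt_km.
Qed.

Lemma tm_delta_pseudo_cube_free (T : eqType) (theta : seq T -> seq T) (g : nat -> T) :
  (forall w, theta w = rev w) -> {in [pred k | k < 3] &, injective g} ->
  inf_pseudo_cube_free theta (g \o tm_delta).
Proof.
move=> thetaE g_inj.
have size_theta w : size (theta w) = size w by rewrite thetaE size_rev.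
have code_inj p q : g (tm_delta p) = g (tm_delta q) -> tm_delta p = tm_delta q.
  by apply: g_inj; rewrite inE tm_delta_lt3.
move=> i n /(pseudo_cube_factor size_theta)[m m_gt0 [[square | mirror] _]].
  apply: (tm_delta_square_free m_gt0 (i := i)) => k lt_km.
  exact/code_inj/(factor_eq_pointwise square).
apply: (@tm_delta_square_free (i + m.-1) 1 isT) => k; rewrite ltnS leqn0 => /eqP->.
rewrite !addn0 addn1 -addnS prednK //.
have := congr1 (nth (g 0) ^~ m.-1) mirror; rewrite thetaE /= nth_rev ?size_factor ?prednK //.
by rewrite subnn !nth_factor ?addn0 ?prednK ?leq_pred // => /code_inj.
Qed.

Theorem mainTheorem11 (Sigma : finType) (hcard : #|Sigma| = 3)
  (theta : seq Sigma -> seq Sigma) (htheta : antimorphic_involution theta) :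
  exists x : nat -> Sigma, inf_pseudo_cube_free theta x.
Proof.
have [f f_inv thetaE] := antimorphic_involution_rev_map htheta.
case: (pickP [pred a | f a != a]) => [a /= fa_a | f_id].
  have [c] : exists c, c \notin [:: a; f a] by apply: exists_notin_pair; rewrite hcard.
  rewrite !inE negb_or => /andP[ca cfa].
  exists (fun n => if thue_morse n then a else c).
  apply: thue_morse_pseudo_cube_free f_inv thetaE _ ca.
  by rewrite !inE negb_or fa_a eq_sym.
pose g k : Sigma := enum_val (cast_ord (esym hcard) (inord k)).
exists (g \o tm_delta); apply: tm_delta_pseudo_cube_free.
  by move=> w; rewrite thetaE map_id_in // => y _; apply/eqP/negbFE/f_id.
move=> p q; rewrite !inE => p_lt3 q_lt3 /enum_val_inj/cast_ord_inj/(congr1 (@nat_of_ord 3)).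
by rewrite !inordK.
Qed.
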